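(* There exist resource selection games in which all resources have the same strictly increasing delay function (i.e., $d_r=d$ for all $r\in R$ with $d$ strictly increasing), together with a social network $G=(N,E)$ and a starting state, such that there is an infinite sequence of states $s^0,s^1,s^2,\dots$ where each $s^{t+1}$ is obtained from $s^t$ by a weak considerate improving move of some coalition $C_t$ that is a clique in $G$.
   Context: Resource selection game: a finite set $N$ of players and a finite set $R$ of resources; every player's strategy set is $R$, and for each $r\in R$ there is a non-negative delay function $d_r:\{1,\dots,|N|\}\to\mathbb{N}$. A state is $s=(s_i)_{i\in N}$ with $s_i\in R$; $\ell_r(s)$ is the number of players choosing $r$; player $i$'s cost is $c_i(s)=d_{s_i}(\ell_{s_i}(s))$ and utility $u_i(s)=-c_i(s)$. For $C\subseteq N$ write $s=(s_C,s_{-C})$. Given an undirected graph $G=(N,E)$, $\mathcal{N}(C)=\{j\in N:\exists i\in C,\ \{i,j\}\in E\}$. A weak considerate improving move of coalition $C$ from state $s$ is a choice $s'_C$ such that $u_i(s'_C,s_{-C})\ge u_i(s)$ for all $i\in C\cup\mathcal{N}(C)$ and $u_i(s'_C,s_{-C})>u_i(s)$ for at least one $i\in C$; the resulting state is $(s'_C,s_{-C})$. *)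

From mathcomp Require Import all_boot all_order all_algebra.
Set Implicit Arguments. Unset Strict Implicit. Unset Printing Implicit Defensive.

Section RSG.
Variables (N R : finType).

Definition state := {ffun N -> R}.

Definition load (s : state) (r : R) : nat := #|[set i | s i == r]|.

Definition cost (d : R -> nat -> nat) (s : state) (i : N) : nat :=
  d (s i) (load s (s i)).

Definition utility (d : R -> nat -> nat) (s : state) (i : N) : int :=
  - (cost d s i)%:Z.

Definition simple_graph (E : rel N) : Prop :=
  (forall i j, E i j = E j i) /\ (forall i, ~~ E i i).

Definition nbhd (E : rel N) (C : {set N}) : {set N} :=
  [set j | [exists i in C, E i j]].

Definition is_clique (E : rel N) (C : {set N}) : Prop :=
  forall i j, i \in C -> j \in C -> i != j -> E i j.

Definition weak_considerate_move (d : R -> nat -> nat) (E : rel N)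
    (C : {set N}) (s s' : state) : Prop :=
  (forall j, j \notin C -> s' j = s j) /\
  (forall i, i \in C :|: nbhd E C -> utility d s i <= utility d s' i)%R /\
  (exists2 i, i \in C & (utility d s i < utility d s' i)%R).

End RSG.

From mathcomp Require Import all_boot all_order all_algebra.
Import Order.TTheory GRing.Theory Num.Theory.
Set Implicit Arguments. Unset Strict Implicit. Unset Printing Implicit Defensive.

(* Eight players share five resources with delay d(k) = k.  The social network
   is four triangles {0,1,2}, {0,3,4}, {3,5,6}, {1,5,7} glued at the players 0,
   1, 3, 5, and the triangles move in rotation.  A move of a triangle only
   crowds resources used by players outside it and outside its neighbourhood,
   so it is considerate, yet after twenty moves the initial state recurs. *)

Lemma load_codom (N R : finType) (s : state N R) (r : R) :
  load s r = count_mem r (codom s).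
Proof.
rewrite /load cardsE codomE count_map -size_filter cardE /enum_mem -filter_predI.
by congr size; apply: eq_filter => j; rewrite !inE andbT.
Qed.

Section ListModel.
Variables n m : nat.

Definition is_profile (l : seq nat) := (size l == n) && all (gtn m.+1) l.

Definition state_of (l : seq nat) : state 'I_n 'I_m.+1 :=
  [ffun i : 'I_n => inord (nth 0 l i)].

Definition profile_load (l : seq nat) (k : nat) := count_mem (nth 0 l k) l.

Definition coalition_of (cl : seq nat) : {set 'I_n} := [set i : 'I_n | val i \in cl].

Definition graph_of (adj : rel nat) : rel 'I_n := fun i j => adj i j.

Lemma state_ofE l i : is_profile l -> val (state_of l i) = nth 0 l i.
Proof.
case/andP=> /eqP size_l /allP lt_l_m; rewrite ffunE; apply: inordK.
by apply: lt_l_m; rewrite mem_nth // size_l.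
Qed.

Lemma profile_codom l : is_profile l -> [seq val x | x <- codom (state_of l)] = l.
Proof.
move=> l_prof; have size_l : size l = n by case/andP: l_prof => /eqP.
rewrite codomE -map_comp; apply: (@eq_from_nth _ 0).
  by rewrite size_map size_enum_ord.
move=> k; rewrite size_map size_enum_ord => lt_k_n.
by rewrite (nth_map (Ordinal lt_k_n)) ?size_enum_ord //= state_ofE // nth_enum_ord.
Qed.

Lemma load_state_of l i :
  is_profile l -> load (state_of l) (state_of l i) = profile_load l i.
Proof.
move=> l_prof.
rewrite /profile_load -(state_ofE i l_prof) -[X in count _ X](profile_codom l_prof).
by rewrite load_codom [RHS]count_map; apply: eq_count => j; rewrite /= val_eqE.
Qed.

Lemma utility_state_of (d : nat -> nat) l i : is_profile l ->
  utility (fun _ : 'I_m.+1 => d) (state_of l) i = (- (d (profile_load l i))%:Z)%R.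
Proof. by move=> l_prof; rewrite /utility /cost load_state_of. Qed.

Definition cliqueb (adj : rel nat) (cl : seq nat) :=
  all (fun a => all (fun b => (a == b) || adj a b) cl) cl.

Lemma is_clique_of (adj : rel nat) cl :
  cliqueb adj cl -> is_clique (graph_of adj) (coalition_of cl).
Proof.
move=> /allP cl_clique i j; rewrite !inE => cl_i cl_j neq_ij.
by have /allP/(_ _ cl_j)/orP[/eqP/val_inj/eqP|] := cl_clique _ cl_i; rewrite ?(negbTE neq_ij).
Qed.

Definition considerate_stepb (d : nat -> nat) (adj : rel nat) (cl l l' : seq nat) :=
  [&& all (fun k => (k \in cl) || (nth 0 l' k == nth 0 l k)) (iota 0 n),
      all (fun k => ((k \in cl) || has (adj^~ k) cl) ==>
                      (d (profile_load l' k) <= d (profile_load l k))) (iota 0 n),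
      has (fun k => d (profile_load l' k) < d (profile_load l k)) cl &
      all (gtn n) cl].

Lemma weak_considerate_move_of d adj cl l l' :
  is_profile l -> is_profile l' -> considerate_stepb d adj cl l l' ->
  weak_considerate_move (fun _ : 'I_m.+1 => d) (graph_of adj) (coalition_of cl)
    (state_of l) (state_of l').
Proof.
move=> l_prof l'_prof /and4P[/allP stay /allP no_worse /hasP[k cl_k better] /allP cl_lt_n].
have iota_n (i : 'I_n) : val i \in iota 0 n by rewrite mem_iota ltn_ord.
split; [|split].
- move=> j; rewrite inE => cl'_j; apply: val_inj; rewrite !state_ofE //.
  by have /orP[cl_j|/eqP] := stay _ (iota_n j); first by rewrite cl_j in cl'_j.
- move=> i C_or_nbhd_i; rewrite !utility_state_of // lerN2 lez_nat.
  apply: (implyP (no_worse _ (iota_n i))).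
  move: C_or_nbhd_i; rewrite !inE => /orP[-> //|/existsP[j /andP[]]].
  by rewrite inE => cl_j adj_ji; apply/orP; right; apply/hasP; exists (val j).
- exists (Ordinal (cl_lt_n _ cl_k)); first by rewrite inE.
  by rewrite !utility_state_of // ltrN2 ltz_nat.
Qed.

End ListModel.

Definition adj_of_edges (es : seq (nat * nat)) : rel nat :=
  fun a b => ((a, b) \in es) || ((b, a) \in es).

Lemma simple_graph_of_edges n (es : seq (nat * nat)) :
  all (fun e => e.1 != e.2) es -> simple_graph (@graph_of n (adj_of_edges es)).
Proof.
move=> /allP loopless; split=> [i j|i]; first by rewrite /graph_of /adj_of_edges orbC.
rewrite /graph_of /adj_of_edges orbb; apply/negP => /loopless.
by rewrite eqxx.
Qed.

Lemma periodic_all (P : pred nat) p : 0 < p ->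
  (forall t, P t = P (t %% p)) -> all P (iota 0 p) -> forall t, P t.
Proof.
move=> p_gt0 P_periodic /allP P_period t; rewrite P_periodic.
by apply: P_period; rewrite mem_iota ltn_mod p_gt0.
Qed.

Definition triangle_edges : seq (nat * nat) :=
  [:: (0, 1); (0, 2); (1, 2); (0, 3); (0, 4); (3, 4);
      (3, 5); (3, 6); (5, 6); (1, 5); (1, 7); (5, 7)].

Definition triangles : seq (seq nat) :=
  [:: [:: 0; 1; 2]; [:: 0; 3; 4]; [:: 3; 5; 6]; [:: 1; 5; 7]].

Definition cycle_profiles : seq (seq nat) :=
 [:: [:: 0; 0; 1; 1; 2; 2; 3; 4]; [:: 1; 3; 0; 1; 2; 2; 3; 4]; [:: 4; 3; 0; 2; 1; 2; 3; 4];
     [:: 4; 3; 0; 0; 1; 3; 2; 4]; [:: 4; 4; 0; 0; 1; 1; 2; 3]; [:: 0; 2; 4; 0; 1; 1; 2; 3];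
     [:: 3; 2; 4; 1; 0; 1; 2; 3]; [:: 3; 2; 4; 4; 0; 2; 1; 3]; [:: 3; 3; 4; 4; 0; 0; 1; 2];
     [:: 4; 1; 3; 4; 0; 0; 1; 2]; [:: 2; 1; 3; 0; 4; 0; 1; 2]; [:: 2; 1; 3; 3; 4; 1; 0; 2];
     [:: 2; 2; 3; 3; 4; 4; 0; 1]; [:: 3; 0; 2; 3; 4; 4; 0; 1]; [:: 1; 0; 2; 4; 3; 4; 0; 1];
     [:: 1; 0; 2; 2; 3; 0; 4; 1]; [:: 1; 1; 2; 2; 3; 3; 4; 0]; [:: 2; 4; 1; 2; 3; 3; 4; 0];
     [:: 0; 4; 1; 3; 2; 3; 4; 0]; [:: 0; 4; 1; 1; 2; 4; 3; 0]].

Definition profile_at (t : nat) := nth [::] cycle_profiles (t %% 20).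
Definition mover_at (t : nat) := nth [::] triangles (t %% 4).

Definition cycle_step_ok (t : nat) :=
  [&& is_profile 8 4 (profile_at t), is_profile 8 4 (profile_at t.+1),
      cliqueb (adj_of_edges triangle_edges) (mover_at t) &
      considerate_stepb 8 id (adj_of_edges triangle_edges)
        (mover_at t) (profile_at t) (profile_at t.+1)].

Lemma cycle_step_ok_mod t : cycle_step_ok t = cycle_step_ok (t %% 20).
Proof.
have mover_mod : t %% 4 = t %% 20 %% 4 by rewrite modn_dvdm.
have next_mod : t.+1 %% 20 = (t %% 20).+1 %% 20.
  by rewrite -addn1 -[in RHS]addn1 modnDml.
by rewrite /cycle_step_ok /profile_at /mover_at mover_mod next_mod modn_mod.
Qed.

Lemma cycle_step_ok_period : all cycle_step_ok (iota 0 20).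
Proof. by vm_compute. Qed.

Theorem theorem2 :
  exists (n m : nat) (d : nat -> nat) (E : rel 'I_n)
         (s : nat -> state 'I_n 'I_m) (C : nat -> {set 'I_n}),
    (forall a b, 1 <= a -> a < b -> b <= n -> d a < d b) /\
    simple_graph E /\
    forall t, is_clique E (C t) /\
              weak_considerate_move (fun _ : 'I_m => d) E (C t) (s t) (s t.+1).
Proof.
exists 8, 5, id, (@graph_of 8 (adj_of_edges triangle_edges)).
exists (fun t => @state_of 8 4 (profile_at t)), (fun t => @coalition_of 8 (mover_at t)).
split; first by [].
split; first exact: simple_graph_of_edges.
move=> t; have := periodic_all (isT : 0 < 20) cycle_step_ok_mod cycle_step_ok_period t.
case/and4P=> prof_t prof_t' clique_t step_t.
split; first exact: is_clique_of.
exact: weak_considerate_move_of.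
Qed.
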